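(* Let $\mathbf A$ and $\mathbf B$ be independent $d\times d$ random matrices that are both determinant preserving. Then (1) $\mathbf A+\mathbf B$ is determinant preserving, and (2) $\mathbf A\mathbf B$ is determinant preserving.
   Context: A random $d\times d$ matrix $\mathbf A$ is called determinant preserving (d.p.) if $\mathbb E[\det(\mathbf A_{\mathcal I,\mathcal J})]=\det(\mathbb E[\mathbf A_{\mathcal I,\mathcal J}])$ for all $\mathcal I,\mathcal J\subseteq\{1,\dots,d\}$ with $|\mathcal I|=|\mathcal J|$, where $\mathbf A_{\mathcal I,\mathcal J}$ is the submatrix with rows indexed by $\mathcal I$ and columns by $\mathcal J$ (all expectations assumed finite). *)

From mathcomp Require Import all_boot all_order all_algebra.
From mathcomp Require Import all_classical all_reals all_analysis.
Set Implicit Arguments. Unset Strict Implicit. Unset Printing Implicit Defensive.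
Import GRing.Theory Num.Theory.
Local Open Scope classical_set_scope.
Local Open Scope ring_scope.

Section RandomMatrices.
Context {dT : measure_display} {T : measurableType dT} {R : realType}.

Definition random_matrix (d : nat) (A : T -> 'M[R]_d) :=
  forall i j, measurable_fun setT (fun w => A w i j).

(* Real-valued expectation (only used for integrable functions). *)
Definition expect (P : probability T R) (f : T -> R) : R := Rintegral P setT f.

(* Strictly increasing index map: encodes an index subset of size k,
   listed in increasing order. *)
Definition incr_idx (k d : nat) (f : 'I_k -> 'I_d) :=
  forall i j : 'I_k, (i < j)%N -> (f i < f j)%N.

(* The submatrix M_{I,J} with I = image f, J = image g. *)
Definition subm (d k : nat) (f g : 'I_k -> 'I_d) (M : 'M[R]_d) : 'M[R]_k :=
  \matrix_(i < k, j < k) M (f i) (g j).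

Definition mean_matrix (P : probability T R) (d : nat) (A : T -> 'M[R]_d)
  : 'M[R]_d := \matrix_(i, j) expect P (fun w => A w i j).

Definition det_preserving (P : probability T R) (d : nat) (A : T -> 'M[R]_d) :=
  forall (k : nat) (f g : 'I_k -> 'I_d), incr_idx f -> incr_idx g ->
    P.-integrable setT (fun w => (\det (subm f g (A w)))%:E) /\
    expect P (fun w => \det (subm f g (A w)))
      = \det (subm f g (mean_matrix P A)).

(* Independence of two random matrices: the joint law of the entries of A and
   of B factorizes on measurable rectangles (a pi-system generating the
   product sigma-algebra). *)
Definition indep_matrices (P : probability T R) (d : nat) (A B : T -> 'M[R]_d) :=
  forall S U : 'I_d -> 'I_d -> set R,
    (forall i j, measurable (S i j)) -> (forall i j, measurable (U i j)) ->
    P ([set w | forall i j, S i j (A w i j)] `&` [set w | forall i j, U i j (B w i j)])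
    = (P [set w | forall i j, S i j (A w i j)] * P [set w | forall i j, U i j (B w i j)])%E.

End RandomMatrices.

From HB Require Import structures.
From mathcomp Require Import all_boot all_order all_algebra all_fingroup.
From mathcomp Require Import all_classical all_reals all_analysis.
From mathcomp Require Import measurable_realfun.
Set Implicit Arguments. Unset Strict Implicit. Unset Printing Implicit Defensive.
Import GRing.Theory Num.Theory.
Local Open Scope ring_scope.

(* Sorting the index maps (at the cost of a sign) and noting that repeated
   indices give a vanishing minor, determinant preservation extends to the
   minors M_{f,g} for arbitrary index maps f, g, also of rectangular matrices
   ("minor preserving").  By Cauchy--Binet in the form
   k! det (XY)_{f,g} = sum_h det X_{f,h} det Y_{h,g}, summed over all maps h,
   the product of two minor preserving matrices is minor preserving as soon as
   E[U V] = E[U] E[V] for U a function of X and V a function of Y; for X, Y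
   functions of A, B this follows from independence, extended by a Dynkin
   argument from the cylinder events of A and B to the sigma-algebras they
   generate.  Finally A + B = [A 1] [1; B], and adjoining deterministic
   columns preserves minor preservation by Laplace expansion along them. *)

Lemma injective_incr_perm k d (f : 'I_k -> 'I_d) : injective f ->
  exists (f0 : 'I_k -> 'I_d) (s : 'S_k), incr_idx f0 /\ f =1 f0 \o s.
Proof.
move=> injf.
pose rk i := #|[set l | (f l < f i)%N]|.
have rk_lt i : (rk i < k)%N.
  rewrite -[k in (_ < k)%N]card_ord -cardsT; apply: proper_card.
  rewrite properE finset.subsetT /=; apply/fintype.subsetPn; exists i => //.
  by rewrite inE ltnn.
have rk_mono i j : (f i < f j)%N -> (rk i < rk j)%N.
  move=> lij; apply: proper_card; rewrite properE; apply/andP; split.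
    by apply/fintype.subsetP => l; rewrite !inE => /ltn_trans; apply.
  by apply/fintype.subsetPn; exists i; rewrite !inE ?ltnn.
pose sf i := Ordinal (rk_lt i).
have sf_inj : injective sf.
  move=> i j /(congr1 val) /= eij; apply: injf; apply/val_inj => /=.
  by case: (ltngtP (f i) (f j)) => // /rk_mono; rewrite eij ltnn.
pose s := perm sf_inj.
exists (fun a => f ((s^-1)%g a)), s; split; last by move=> i; rewrite /= permK.
move=> a b ab.
case: (ltngtP (f ((s^-1)%g a)) (f ((s^-1)%g b))) => // [/rk_mono|].
  have: (val (s ((s^-1)%g b)) < val (s ((s^-1)%g a)))%N -> False.
    by rewrite !permKV => /(ltn_trans ab); rewrite ltnn.
  by rewrite !permE.
move/val_inj/injf/(congr1 s); rewrite !permKV => eab.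
by move: ab; rewrite eab ltnn.
Qed.

Section Minors.
Variable R : comNzRingType.

Lemma det_mxsub_incr k m n (f : 'I_k -> 'I_m) (g : 'I_k -> 'I_n) :
  (forall M : 'M[R]_(m, n), \det (mxsub f g M) = 0) \/
  exists (c : R) (f0 : 'I_k -> 'I_m) (g0 : 'I_k -> 'I_n),
    [/\ incr_idx f0, incr_idx g0 &
        forall M, \det (mxsub f g M) = c * \det (mxsub f0 g0 M)].
Proof.
have [/injectiveP injf|/injectivePn [i1 [i2 ne12 e12]]] := boolP (injectiveb f);
  last by left=> M; apply: (determinant_alternate ne12) => j; rewrite !mxE e12.
have [/injectiveP injg|/injectivePn [i1 [i2 ne12 e12]]] := boolP (injectiveb g);
  last by left=> M; rewrite -det_tr; apply: (determinant_alternate ne12) => j; rewrite !mxE e12.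
right; have [f0 [s [if0 ef]]] := injective_incr_perm injf.
have [g0 [t [ig0 eg]]] := injective_incr_perm injg.
exists ((-1) ^+ s * (-1) ^+ t), f0, g0; split => // M.
have -> : mxsub f g M = row_perm s (col_perm t (mxsub f0 g0 M)).
  by apply/matrixP => i j; rewrite !mxE ef eg.
rewrite row_permE col_permE !det_mulmx !det_perm odd_permV.
by rewrite -mulrA [\det _ * _]mulrC.
Qed.

Lemma expand_det_mxsub_col k m n (M : 'M[R]_(m, n))
    (f : 'I_k.+1 -> 'I_m) (g : 'I_k.+1 -> 'I_n) j :
  \det (mxsub f g M) = \sum_i M (f i) (g j) * (-1) ^+ (i + j) *
    \det (mxsub (f \o lift i) (g \o lift j) M).
Proof.
rewrite (expand_det_col _ j); apply: eq_bigr => i _.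
rewrite /cofactor mxE mulrA; congr (_ * \det _).
by apply/matrixP => a b; rewrite !mxE.
Qed.

Lemma det_mulmx_expand k m (X : 'M[R]_(k, m)) (Y : 'M[R]_(m, k)) :
  \det (X *m Y) = \sum_(h : {ffun 'I_k -> 'I_m})
    (\prod_i X i (h i)) * \det (mxsub h id Y).
Proof.
rewrite /(\det _).
transitivity (\sum_(s : 'S_k) \sum_(h : {ffun 'I_k -> 'I_m})
    (-1) ^+ s * \prod_i (X i (h i) * Y (h i) (s i))).
  apply: eq_bigr => s _; rewrite -big_distrr /=; congr (_ * _).
  rewrite -(bigA_distr_bigA (fun i l => X i l * Y l (s i))) /=.
  by apply: eq_bigr => i _; rewrite mxE.
rewrite exchange_big /=; apply: eq_bigr => h _.
rewrite big_distrr /=; apply: eq_bigr => s _.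
rewrite big_split /= mulrCA; congr (_ * (_ * _)).
by apply: eq_bigr => i _; rewrite mxE.
Qed.

(* Cauchy--Binet, summed over all column maps rather than increasing ones. *)
Lemma det_mulmx_sum_minors k m (X : 'M[R]_(k, m)) (Y : 'M[R]_(m, k)) :
  k`!%:R * \det (X *m Y) = \sum_(h : {ffun 'I_k -> 'I_m})
    \det (mxsub id h X) * \det (mxsub h id Y).
Proof.
transitivity (\sum_(s : 'S_k) \sum_(h : {ffun 'I_k -> 'I_m})
    (-1) ^+ s * (\prod_i X i (h (s i))) * \det (mxsub h id Y)); last first.
  rewrite exchange_big /=; apply: eq_bigr => h _.
  rewrite /(\det (mxsub id h X)) big_distrl /=.
  apply: eq_bigr => s _; congr (_ * _ * _).
  by apply: eq_bigr => i _; rewrite mxE.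
rewrite mulr_natl -card_Sn -sumr_const; apply: eq_bigr => s _.
pose sh (h : {ffun 'I_k -> 'I_m}) : {ffun 'I_k -> 'I_m} := [ffun i => h (s i)].
rewrite det_mulmx_expand (reindex sh) /=; last first.
  exists (fun h : {ffun 'I_k -> 'I_m} => [ffun i => h ((s^-1)%g i)]) => h _.
    by apply/ffunP => i; rewrite !ffunE permKV.
  by apply/ffunP => i; rewrite !ffunE permK.
apply: eq_bigr => h _.
have -> : mxsub (sh h) id Y = row_perm s (mxsub h id Y).
  by apply/matrixP => i j; rewrite !mxE ffunE.
rewrite row_permE det_mulmx det_perm.
under eq_bigr do rewrite ffunE.
by rewrite mulrCA mulrA.
Qed.

End Minors.

Lemma det_mxsub_mulmx (R : numFieldType) k m n p (f : 'I_k -> 'I_m)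
    (g : 'I_k -> 'I_p) (M : 'M[R]_(m, n)) (N : 'M[R]_(n, p)) :
  \det (mxsub f g (M *m N)) = k`!%:R^-1 *
    \sum_(h : {ffun 'I_k -> 'I_n}) \det (mxsub f h M) * \det (mxsub h g N).
Proof.
have k_neq0 : k`!%:R != 0 :> R by rewrite pnatr_eq0 -lt0n fact_gt0.
have -> : mxsub f g (M *m N) = mxsub f id M *m mxsub id g N.
  by apply/matrixP => i j; rewrite !mxE; apply: eq_bigr => l _; rewrite !mxE.
apply: (mulfI k_neq0); rewrite mulrA mulfV // mul1r det_mulmx_sum_minors.
by apply: eq_bigr => h _; rewrite -!mxsub_comp.
Qed.

Local Open Scope classical_set_scope.

Section Expectation.
Context {dT : measure_display} {T : measurableType dT} {R : realType}.
Variable P : probability T R.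

Definition has_expect (f : T -> R) (c : R) :=
  P.-integrable setT (EFin \o f) /\ expect P f = c.

Lemma eq_has_expect f g c : f =1 g -> has_expect f c -> has_expect g c.
Proof. by move=> /funext ->. Qed.

Lemma has_expect_cst c : has_expect (fun=> c) c.
Proof.
split; first exact: finite_measure_integrable_cst.
by rewrite /expect Rintegral_cst // /= probability_setT mulr1.
Qed.

Lemma has_expectD f g a b :
  has_expect f a -> has_expect g b -> has_expect (fun w => f w + g w) (a + b).
Proof.
move=> [If <-] [Ig <-]; split; first by have := integrableD measurableT If Ig.
by rewrite /expect RintegralD.
Qed.

Lemma has_expectZ f a c : has_expect f a -> has_expect (fun w => c * f w) (c * a).
Proof.
move=> [If <-]; split; first by have := integrableZl measurableT c If.
by rewrite /expect RintegralZl.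
Qed.

Lemma has_expect_sum (I : Type) (r : seq I) (Q : pred I) (F : I -> T -> R) (c : I -> R) :
  (forall i, Q i -> has_expect (F i) (c i)) ->
  has_expect (fun w => \sum_(i <- r | Q i) F i w) (\sum_(i <- r | Q i) c i).
Proof.
move=> Fc; elim: r => [|x r IH].
  by rewrite big_nil; apply: eq_has_expect (has_expect_cst 0) => w; rewrite big_nil.
rewrite big_cons; case: ifP => Qx.
  by apply: eq_has_expect (has_expectD (Fc _ Qx) IH) => w; rewrite big_cons Qx.
by apply: eq_has_expect IH => w; rewrite big_cons Qx.
Qed.

End Expectation.

Section Independence.
Context {dT : measure_display} {T : measurableType dT} {R : realType}.
Variable P : probability T R.
Local Open Scope ereal_scope.

Lemma indep_sigma_l (G H : set (set T)) :
  setI_closed G -> G `<=` measurable -> H `<=` measurable ->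
  (forall E F, G E -> H F -> P (E `&` F) = P E * P F) ->
  forall E F, <<s G >> E -> H F -> P (E `&` F) = P E * P F.
Proof.
move=> GI Gm Hm GH E F sE HF.
have sGm : <<s G >> `<=` measurable := smallest_sub (sigma_algebra_measurable T) Gm.
have mF := Hm _ HF.
have probE (S : set T) : measurable S -> P S = (fine (P S))%:E.
  by move=> mS; rewrite fineK // fin_num_measure.
apply: (@dynkin_induction _ (g_sigma_algebraType G) G
   (fun E => P (E `&` F) = P E * P F)) => //.
- by rewrite /= setTI probability_setT mul1e.
- by move=> S GS; exact: GH.
- move=> S /sGm mS PSF /=.
  have PF : P F = P (~` S `&` F) + P (S `&` F).
    rewrite -measureU; first by rewrite -setIUl setvU setTI.
    + by apply: measurableI => //; exact: measurableC.
    + exact: measurableI.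
    + by rewrite setIACA setICl set0I.
  have PT : P setT = P (~` S) + P S.
    by rewrite -measureU ?setvU //; [exact: measurableC|exact: setICl].
  move: PF PT; rewrite PSF probability_setT.
  rewrite (probE _ mF) (probE _ mS) (probE _ (measurableC mS)).
  rewrite (probE _ (measurableI _ _ (measurableC mS) mF)).
  rewrite -!EFinM -!EFinD => eF0 eS0; congr EFin.
  have eF := EFin_inj eF0; have eS := EFin_inj eS0.
  have -> : fine (P (~` S `&` F)) = (fine (P F) - fine (P S) * fine (P F))%R.
    by rewrite {1}eF addrK.
  have -> : fine (P (~` S)) = (1 - fine (P S))%R by rewrite eS addrK.
  by rewrite mulrBl mul1r.
- move=> Fn mFn tFn PFn /=.
  have mFn' n : @measurable _ T (Fn n) := sGm _ (mFn n).
  rewrite setI_bigcupl measure_bigcup //; last first.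
    - exact: trivIset_setIr.
    - by move=> n _; exact: measurableI.
  rewrite measure_bigcup // (probE _ mF) muleC -nneseriesZl //.
  by apply: eq_eseriesr => n _; rewrite -(probE _ mF) muleC; exact: PFn n.
Qed.

End Independence.

Section ProductIntegral.
Context {R : realType}.
Local Open Scope ereal_scope.

Lemma measurable_EFin_mul : measurable_fun setT (fun z : R * R => (z.1 * z.2)%:E).
Proof.
apply/measurable_EFinP; apply: measurable_realfun.measurable_funM.
  exact: measurable_fst.
exact: measurable_snd.
Qed.

Lemma integral_prod_meas_mul (m1 m2 : {sigma_finite_measure set R -> \bar R}) :
  m1.-integrable setT EFin -> m2.-integrable setT EFin ->
  (m1 \x m2).-integrable setT (fun z : R * R => (z.1 * z.2)%:E) /\
  \int[m1 \x m2]_z (z.1 * z.2)%:E = \int[m1]_x x%:E * \int[m2]_y y%:E.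
Proof.
move=> i1 i2.
have [_ f1] := integrableP _ _ _ i1.
have [_ f2] := integrableP _ _ _ i2.
have imul : (m1 \x m2).-integrable setT (fun z : R * R => (z.1 * z.2)%:E).
  apply/integrableP; split; first exact: measurable_EFin_mul.
  rewrite (fubini_tonelli1 (fun z : R * R => `|(z.1 * z.2)%:E|)); last 2 first.
    exact: measurableT_comp measurable_EFin_mul.
    by [].
  rewrite /fubini_F /=.
  under eq_integral => x _.
    under eq_integral => y _ do rewrite normrM EFinM.
    rewrite ge0_integralZl //; last first.
      by apply: measurableT_comp => //; exact: measurable_EFinP.
    over.
  rewrite /= ge0_integralZr //; last 2 first.
    by apply: measurableT_comp => //; exact: measurable_EFinP.
    exact: integral_ge0.
  apply: lte_mul_pinfty; first exact: integral_ge0.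
    by rewrite ge0_fin_numE; [exact: f1|exact: integral_ge0].
  exact: f2.
split => //.
rewrite -integral12_prod_meas1 // /fubini_F /=.
have fin2 : \int[m2]_y y%:E \is a fin_num by exact: integrable_fin_num.
under eq_integral => x _.
  under eq_integral => y _ do rewrite EFinM.
  rewrite integralZl //.
  over.
by rewrite /= -(fineK fin2) integralZr.
Qed.

End ProductIntegral.

Section IndependentProduct.
Context {dT : measure_display} {T : measurableType dT} {R : realType}.
Variable P : probability T R.

Lemma has_expect_mul_indep (X Y : T -> R) :
  measurable_fun setT X -> measurable_fun setT Y ->
  (forall S U, measurable S -> measurable U ->
     P (X @^-1` S `&` Y @^-1` U) = (P (X @^-1` S) * P (Y @^-1` U))%E) ->
  P.-integrable setT (EFin \o X) -> P.-integrable setT (EFin \o Y) ->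
  has_expect P (fun w => X w * Y w) (expect P X * expect P Y).
Proof.
move=> mX mY XY iX iY.
pose Xm : {mfun T >-> R} := HB.pack X (isMeasurableFun.Build _ _ _ _ _ mX).
pose Ym : {mfun T >-> R} := HB.pack Y (isMeasurableFun.Build _ _ _ _ _ mY).
have mXY : measurable_fun setT (fun w => (X w, Y w)) := measurable_fun_pair mX mY.
pose XYm : {mfun T >-> (R * R)%type} :=
  HB.pack (fun w => (X w, Y w)) (isMeasurableFun.Build _ _ _ _ _ mXY).
pose muX := distribution P Xm.
pose muY := distribution P Ym.
pose mu := distribution P XYm.
have mu_rect S U : measurable S -> measurable U -> mu (S `*` U) = (muX S * muY U)%E.
  by move=> mS mU; exact: XY.
have mu_prod A : measurable A -> A `<=` setT -> (muX \x muY)%E A = mu A.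
  by move=> mA _; exact: product_measure_unique mu_rect _ mA.
have mEFin := @EFin_measurable R setT.
have i_muX : muX.-integrable setT EFin.
  exact: (integrable_pushforward mX mEFin iX measurableT).
have i_muY : muY.-integrable setT EFin.
  exact: (integrable_pushforward mY mEFin iY measurableT).
have [imul emul] := integral_prod_meas_mul i_muX i_muY.
have iXY : P.-integrable setT (EFin \o (fun w => X w * Y w)).
  apply/integrableP; split.
    by apply/measurable_EFinP; exact: measurable_realfun.measurable_funM.
  have -> : (\int[P]_(w in setT) `|(X w * Y w)%:E| =
             \int[mu]_(z in setT) `|(z.1 * z.2)%:E|)%E.
    rewrite (ge0_integral_pushforward mXY) //.
    exact: measurableT_comp measurable_EFin_mul.
  rewrite -(eq_measure_integral mu mu_prod).
  by have /integrableP[_] := imul.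
split => //; rewrite /expect /Rintegral.
have -> : (\int[P]_(w in setT) (X w * Y w)%:E =
           \int[mu]_(z in setT) (z.1 * z.2)%:E)%E.
  by rewrite (integral_pushforward mXY measurable_EFin_mul iXY measurableT).
rewrite -(eq_measure_integral mu mu_prod) emul.
rewrite (integral_pushforward mX mEFin iX measurableT).
rewrite (integral_pushforward mY mEFin iY measurableT).
by rewrite !preimage_setT fineM //; exact: integrable_fin_num.
Qed.

End IndependentProduct.

Lemma measurable_det (d : measure_display) (T : measurableType d) (R : realType)
    k (Z : T -> 'M[R]_k) :
  (forall i j, measurable_fun setT (fun w => Z w i j)) ->
  measurable_fun setT (fun w => \det (Z w)).
Proof.
move=> mZ; apply: measurable_sum => s.
apply: measurable_realfun.measurable_funM; first exact: measurable_cst.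
by apply: measurable_prod => i _; exact: mZ.
Qed.

Section MatrixEvents.
Context {dT : measure_display} {T : measurableType dT} {R : realType}.
Variable P : probability T R.

Definition mx_events d (A : T -> 'M[R]_d) : set (set T) :=
  [set E | exists2 S : 'I_d -> 'I_d -> set R, (forall i j, measurable (S i j)) &
     E = [set w | forall i j, S i j (A w i j)]].

Lemma measurable_mx_events_entry d (A : T -> 'M[R]_d) i j :
  measurable_fun [set: g_sigma_algebraType (mx_events A)] (fun w => A w i j).
Proof.
move=> _ U mU; rewrite setTI; apply: sub_sigma_algebra.
exists (fun a b => if (a == i) && (b == j) then U else setT).
  by move=> a b; case: ifP.
apply/seteqP; split => w /=.
  by move=> Uw a b; case: ifP => // /andP[/eqP -> /eqP ->].
by move/(_ i j); rewrite !eqxx.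
Qed.

Lemma mx_events_setI_closed d (A : T -> 'M[R]_d) : setI_closed (mx_events A).
Proof.
move=> _ _ [S mS ->] [U mU ->].
exists (fun i j => S i j `&` U i j); first by move=> i j; exact: measurableI.
apply/seteqP; split => w /=.
  by move=> [SA UA] i j; split; [exact: SA|exact: UA].
by move=> SUA; split => i j; have [] := SUA i j.
Qed.

Lemma mx_events_measurable d (A : T -> 'M[R]_d) :
  random_matrix A -> mx_events A `<=` measurable.
Proof.
move=> rA _ [S mS ->].
have -> : [set w | forall i j, S i j (A w i j)] =
    \bigcap_(p in [set: 'I_d * 'I_d]) ((fun w => A w p.1 p.2) @^-1` S p.1 p.2).
  apply/seteqP; split => w /=; first by move=> SA [i j] _; exact: SA.
  by move=> SA i j; exact: (SA (i, j)).
apply: fin_bigcap_measurable; first exact: finite_finset.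
by move=> [i j] _ /=; rewrite -[X in measurable X]setTI; exact: rA.
Qed.

Lemma sigma_mx_events_measurable d (A : T -> 'M[R]_d) :
  random_matrix A -> <<s mx_events A >> `<=` measurable.
Proof.
move=> rA; apply: smallest_sub; first exact: sigma_algebra_measurable.
exact: mx_events_measurable.
Qed.

Lemma has_expect_mul_indep_mx d (A B : T -> 'M[R]_d) (X Y : T -> R) :
  random_matrix A -> random_matrix B -> indep_matrices P A B ->
  measurable_fun [set: g_sigma_algebraType (mx_events A)] X ->
  measurable_fun [set: g_sigma_algebraType (mx_events B)] Y ->
  P.-integrable setT (EFin \o X) -> P.-integrable setT (EFin \o Y) ->
  has_expect P (fun w => X w * Y w) (expect P X * expect P Y).
Proof.
move=> rA rB iAB mX mY iX iY.
have sA := sigma_mx_events_measurable rA; have sB := sigma_mx_events_measurable rB.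
have indep_sA_B : forall E F, <<s mx_events A >> E -> mx_events B F ->
    P (E `&` F) = (P E * P F)%E.
  apply: indep_sigma_l; [exact: mx_events_setI_closed|
                         exact: mx_events_measurable|exact: mx_events_measurable|].
  by move=> _ _ [S mS ->] [U mU ->]; exact: iAB.
have indep_sB_sA : forall F E, <<s mx_events B >> F -> <<s mx_events A >> E ->
    P (F `&` E) = (P F * P E)%E.
  apply: indep_sigma_l; [exact: mx_events_setI_closed|exact: mx_events_measurable|exact: sA|].
  by move=> F E BF sE; rewrite setIC muleC; exact: indep_sA_B.
have sX S : measurable S -> <<s mx_events A >> (X @^-1` S).
  by move=> mS; have := mX measurableT _ mS; rewrite setTI.
have sY S : measurable S -> <<s mx_events B >> (Y @^-1` S).
  by move=> mS; have := mY measurableT _ mS; rewrite setTI.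
apply: has_expect_mul_indep iX iY.
- by move=> _ S mS; rewrite setTI; apply: sA; exact: sX.
- by move=> _ S mS; rewrite setTI; apply: sB; exact: sY.
- by move=> S U mS mU; rewrite setIC muleC; apply: indep_sB_sA; [exact: sY|exact: sX].
Qed.

End MatrixEvents.

Section MinorPreserving.
Context {dT : measure_display} {T : measurableType dT} {R : realType}.
Variable P : probability T R.

Definition mean_mx m n (X : T -> 'M[R]_(m, n)) : 'M[R]_(m, n) :=
  \matrix_(i, j) expect P (fun w => X w i j).

Definition minor_preserving m n (X : T -> 'M[R]_(m, n)) :=
  forall k (f : 'I_k -> 'I_m) (g : 'I_k -> 'I_n),
    has_expect P (fun w => \det (mxsub f g (X w))) (\det (mxsub f g (mean_mx X))).

Lemma det_preserving_minor d (A : T -> 'M[R]_d) :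
  det_preserving P A -> minor_preserving A.
Proof.
move=> dpA k f g; have [f0|[c [f0 [g0 [if0 ig0 e]]]]] := det_mxsub_incr R f g.
  by rewrite f0; apply: eq_has_expect (has_expect_cst P 0) => w; rewrite f0.
rewrite e; have [iA eA] := dpA k f0 g0 if0 ig0.
by apply: eq_has_expect (has_expectZ c (conj iA eA)) => w; rewrite e.
Qed.

Lemma minor_det_preserving d (A : T -> 'M[R]_d) :
  minor_preserving A -> det_preserving P A.
Proof. by move=> mA k f g _ _; exact: mA. Qed.

Lemma minor_preserving_tr m n (X : T -> 'M[R]_(m, n)) :
  minor_preserving X -> minor_preserving (fun w => (X w)^T).
Proof.
move=> mX k f g.
have -> : mean_mx (fun w => (X w)^T) = (mean_mx X)^T.
  by apply/matrixP => i j; rewrite !mxE; apply: eq_Rintegral => w _; rewrite mxE.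
rewrite -trmx_mxsub det_tr; apply: eq_has_expect (mX k g f) => w.
by rewrite -trmx_mxsub det_tr.
Qed.

(* Laplace expansion along a deterministic column reduces the order of the minor. *)
Lemma minor_preserving_cst_cols m n p (X : T -> 'M[R]_(m, n)) (Z : T -> 'M[R]_(m, p))
    (cst_col : pred 'I_p) (src : 'I_p -> 'I_n) (K : 'M[R]_(m, p)) :
  (forall w i c, Z w i c = if cst_col c then K i c else X w i (src c)) ->
  minor_preserving X -> minor_preserving Z.
Proof.
move=> Z_def mX.
have mean_Z i c : mean_mx Z i c = if cst_col c then K i c else mean_mx X i (src c).
  rewrite !mxE; case: ifP => Kc; last first.
    by apply: eq_Rintegral => w _; rewrite Z_def Kc.
  have [_ <-] := has_expect_cst P (K i c).
  by apply: eq_Rintegral => w _; rewrite Z_def Kc.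
move=> k; elim: k => [|k IHk] f g.
  by rewrite det_mx00; apply: eq_has_expect (has_expect_cst P 1) => w; rewrite det_mx00.
have [j Kj|nK] := pickP (fun j => cst_col (g j)).
  rewrite (expand_det_mxsub_col _ _ _ j).
  apply: eq_has_expect (has_expect_sum _ (fun i _ => has_expectZ _ (IHk _ _))) => w.
  rewrite (expand_det_mxsub_col _ _ _ j); apply: eq_bigr => i _.
  by rewrite mean_Z Z_def Kj.
have {}nK b : cst_col (g b) = false by exact: nK.
have -> : mxsub f g (mean_mx Z) = mxsub f (src \o g) (mean_mx X).
  by apply/matrixP => a b; rewrite [LHS]mxE [RHS]mxE mean_Z nK.
apply: eq_has_expect (mX _ _ _) => w; congr (\det _).
by apply/matrixP => a b; rewrite !mxE Z_def nK.
Qed.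

Lemma minor_preserving_row_mx_cst m n (X : T -> 'M[R]_(m, n)) (K : 'M[R]_(m, n)) :
  minor_preserving X -> minor_preserving (fun w => row_mx (X w) K).
Proof.
apply: (minor_preserving_cst_cols (K := row_mx 0 K)
  (cst_col := fun c => if fintype.split c is inr _ then true else false)
  (src := fun c => match fintype.split c with inl a | inr a => a end)) => w i c.
by rewrite !mxE; case: fintype.split => a; rewrite ?mxE.
Qed.

Lemma minor_preserving_row_cst_mx m n (X : T -> 'M[R]_(m, n)) (K : 'M[R]_(m, n)) :
  minor_preserving X -> minor_preserving (fun w => row_mx K (X w)).
Proof.
apply: (minor_preserving_cst_cols (K := row_mx K 0)
  (cst_col := fun c => if fintype.split c is inl _ then true else false)
  (src := fun c => match fintype.split c with inl a | inr a => a end)) => w i c.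
by rewrite !mxE; case: fintype.split => a; rewrite ?mxE.
Qed.

Lemma minor_preserving_col_cst_mx m n (Y : T -> 'M[R]_(m, n)) (K : 'M[R]_(m, n)) :
  minor_preserving Y -> minor_preserving (fun w => col_mx K (Y w)).
Proof.
move=> /minor_preserving_tr /(minor_preserving_row_cst_mx K^T) /minor_preserving_tr.
by under eq_fun do rewrite tr_row_mx !trmxK.
Qed.

Lemma minor_preserving_mul m n p (X : T -> 'M[R]_(m, n)) (Y : T -> 'M[R]_(n, p)) :
  minor_preserving X -> minor_preserving Y ->
  (forall k (f : 'I_k -> 'I_m) (h : 'I_k -> 'I_n) (g : 'I_k -> 'I_p),
     has_expect P (fun w => \det (mxsub f h (X w)) * \det (mxsub h g (Y w)))
       (expect P (fun w => \det (mxsub f h (X w))) *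
        expect P (fun w => \det (mxsub h g (Y w))))) ->
  minor_preserving (fun w => X w *m Y w).
Proof.
move=> mX mY XY.
have minor_mul k (f : 'I_k -> 'I_m) (g : 'I_k -> 'I_p) :
    has_expect P (fun w => \det (mxsub f g (X w *m Y w)))
      (\det (mxsub f g (mean_mx X *m mean_mx Y))).
  rewrite det_mxsub_mulmx; apply: eq_has_expect; last first.
    apply: has_expectZ; apply: has_expect_sum => h _.
    by rewrite -(mX k f h).2 -(mY k h g).2; exact: XY.
  by move=> w /=; rewrite det_mxsub_mulmx.
have mean_mul : mean_mx (fun w => X w *m Y w) = mean_mx X *m mean_mx Y.
  apply/matrixP => i j; have [_] := minor_mul 1%N (fun=> i) (fun=> j).
  rewrite det_mx11 mxE => <-; rewrite mxE.
  by apply: eq_Rintegral => w _; rewrite det_mx11 !mxE.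
by move=> k f g; rewrite mean_mul; exact: minor_mul.
Qed.

Lemma minor_preserving_mul_indep d (A B : T -> 'M[R]_d) m n p
    (X : T -> 'M[R]_(m, n)) (Y : T -> 'M[R]_(n, p)) :
  random_matrix A -> random_matrix B -> indep_matrices P A B ->
  (forall i j, measurable_fun [set: g_sigma_algebraType (mx_events A)] (fun w => X w i j)) ->
  (forall i j, measurable_fun [set: g_sigma_algebraType (mx_events B)] (fun w => Y w i j)) ->
  minor_preserving X -> minor_preserving Y -> minor_preserving (fun w => X w *m Y w).
Proof.
move=> rA rB iAB mX mY pX pY; apply: (minor_preserving_mul pX pY) => k f h g.
apply: has_expect_mul_indep_mx rA rB iAB _ _ (pX k f h).1 (pY k h g).1.
  by apply: measurable_det => i j; under eq_fun do rewrite mxE; exact: mX.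
by apply: measurable_det => i j; under eq_fun do rewrite mxE; exact: mY.
Qed.

End MinorPreserving.

Theorem lemma4 (dT : measure_display) (T : measurableType dT) (R : realType)
  (P : probability T R) (d : nat) (A B : T -> 'M[R]_d) :
  random_matrix A -> random_matrix B -> indep_matrices P A B ->
  det_preserving P A -> det_preserving P B ->
  det_preserving P (fun w => A w + B w) /\ det_preserving P (fun w => A w *m B w).
Proof.
move=> rA rB iAB /det_preserving_minor mA /det_preserving_minor mB.
split; apply: minor_det_preserving; last first.
  by apply: minor_preserving_mul_indep rA rB iAB _ _ mA mB => i j;
    exact: measurable_mx_events_entry.
have -> : (fun w => A w + B w) = (fun w => row_mx (A w) 1%:M *m col_mx 1%:M (B w)).
  by apply/funext => w; rewrite mul_row_col mulmx1 mul1mx.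
apply: (minor_preserving_mul_indep rA rB iAB _ _
  (minor_preserving_row_mx_cst 1%:M mA) (minor_preserving_col_cst_mx 1%:M mB)) => i j.
- rewrite /row_mx; under eq_fun do rewrite mxE.
  case: (fintype.split j) => a; last exact: measurable_cst.
  exact: measurable_mx_events_entry.
- rewrite /col_mx; under eq_fun do rewrite mxE.
  case: (fintype.split i) => a; first exact: measurable_cst.
  exact: measurable_mx_events_entry.
Qed.
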